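(* Assume $\clubsuit$. Then: (1) For every family $\{A_\alpha:\alpha<\omega_2\}$ of unbounded subsets of $\omega_1$ and every ordinal $\tau<\omega\cdot\omega$ there is $B\subseteq\omega_2$, $|B|=\aleph_2$, such that $\mathrm{otp}(\bigcap_{\alpha\in B}A_\alpha)\geq\tau$. (2) For every $\tau<\omega\cdot\omega$, $\binom{\omega_2}{\omega_1}\rightarrow\binom{\omega_2}{\tau}^{1,1}_{\aleph_0}$ holds.
   Context: $\clubsuit$ (tiltan) at $\aleph_1$: there is a sequence $\langle T_\alpha:\alpha\in\lim(\omega_1)\rangle$ such that each $T_\alpha$ is a cofinal subset of $\alpha$, and for every unbounded $A\subseteq\omega_1$ the set $\{\alpha: T_\alpha\subseteq A\}$ is stationary. The polarized relation $\binom{\alpha}{\beta}\rightarrow\binom{\gamma}{\delta}^{1,1}_\theta$ means: for every $c:\alpha\times\beta\to\theta$ there are $A\subseteq\alpha$ of order type $\gamma$ and $B\subseteq\beta$ of order type $\delta$ such that $c\restriction(A\times B)$ is constant. *)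

From Stdlib Require Import Arith Classical.

Section Defs.
Context {T : Type} (lt : T -> T -> Prop).

Definition le (x y : T) : Prop := x = y \/ lt x y.

Definition well_order : Prop :=
  well_founded lt /\ (forall x, ~ lt x x) /\
  (forall x y z, lt x y -> lt y z -> lt x z) /\
  (forall x y, lt x y \/ x = y \/ lt y x).

(* (T, lt) is (isomorphic to) omega_1: an uncountable well-order all of whose
   proper initial segments are countable *)
Definition is_omega1 : Prop :=
  well_order /\
  (~ exists f : T -> nat, forall x y, f x = f y -> x = y) /\
  (forall a, exists f : T -> nat,
      forall x y, lt x a -> lt y a -> f x = f y -> x = y).

Definition is_limit (a : T) : Prop :=
  (exists y, lt y a) /\ (forall y, lt y a -> exists z, lt y z /\ lt z a).

Definition cofinal_in (S : T -> Prop) (a : T) : Prop :=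
  (forall y, S y -> lt y a) /\ (forall y, lt y a -> exists z, S z /\ le y z).

Definition unbounded (A : T -> Prop) : Prop :=
  forall x, exists y, A y /\ le x y.

Definition club (C : T -> Prop) : Prop :=
  unbounded C /\
  (forall a, is_limit a ->
     (forall y, lt y a -> exists z, C z /\ lt y z /\ lt z a) -> C a).

Definition stationary (S : T -> Prop) : Prop :=
  forall C, club C -> exists a, S a /\ C a.

Definition clubsuit : Prop :=
  exists Tseq : T -> T -> Prop,
    (forall a, is_limit a -> cofinal_in (Tseq a) a) /\
    (forall A, unbounded A ->
       stationary (fun a => is_limit a /\ forall x, Tseq a x -> A x)).

(* The ordinal tau = omega*n + m, with elements (i,k), i<n, k arbitrary,
   followed by (n,k), k<m; ordered lexicographically. *)
Definition in_tau (n m : nat) (p : nat * nat) : Prop :=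
  fst p < n \/ (fst p = n /\ snd p < m).

Definition lex_lt (p q : nat * nat) : Prop :=
  fst p < fst q \/ (fst p = fst q /\ snd p < snd q).

Definition tau_incr (n m : nat) (f : nat * nat -> T) : Prop :=
  forall p q, in_tau n m p -> in_tau n m q -> lex_lt p q -> lt (f p) (f q).

Definition otp_ge_tau (n m : nat) (X : T -> Prop) : Prop :=
  exists f : nat * nat -> T, tau_incr n m f /\ (forall p, in_tau n m p -> X (f p)).

Definition otp_eq_tau (n m : nat) (X : T -> Prop) : Prop :=
  exists f : nat * nat -> T, tau_incr n m f /\
    (forall p, in_tau n m p -> X (f p)) /\
    (forall x, X x -> exists p, in_tau n m p /\ f p = x).

Definition otp_full (A : T -> Prop) : Prop :=
  exists f : T -> T, (forall x y, lt x y -> lt (f x) (f y)) /\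
    (forall x, A (f x)) /\ (forall y, A y -> exists x, f x = y).
End Defs.

(* (U, ltU) is omega_2, relative to (T, ltT) being omega_1:
   a well-order of size > aleph_1 all of whose initial segments have size <= aleph_1 *)
Definition is_omega2 {T U : Type} (ltT : T -> T -> Prop) (ltU : U -> U -> Prop) : Prop :=
  well_order ltU /\
  (~ exists f : U -> T, forall x y, f x = f y -> x = y) /\
  (forall a, exists f : U -> T,
      forall x y, ltU x a -> ltU y a -> f x = f y -> x = y).

(* B, a subset of U (= omega_2), has cardinality aleph_2, i.e. does not inject into omega_1 *)
Definition card_aleph2 {T U : Type} (B : U -> Prop) : Prop :=
  ~ exists f : U -> T, forall x y, B x -> B y -> f x = f y -> x = y.

From Stdlib Require Import Arith Classical.
From Stdlib Require Import ClassicalEpsilon FunctionalExtensionality Cantor Lia.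

(* Under clubsuit every unbounded A ⊆ ω₁ contains a guessed ladder T_δ, with δ above any
   prescribed bound. Given aleph_2 unbounded sets A_a, the map a ↦ δ_a has only aleph_1 values,
   so aleph_2 many a share one δ and the intersection of their A_a contains the ω-sequence T_δ.
   Repeating this n+1 times, each round above the previous ladders, gives an aleph_2 subfamily
   whose intersection contains a copy of ω·(n+1) > τ. For the polarized relation, give each a a
   colour k_a taken unboundedly often by c(a, -); aleph_2 many a share one colour k, and the
   first part applied to the sets c(a, -)⁻¹(k) yields the homogeneous rectangle, whose first
   side has order type ω₂ because it has size aleph_2. *)

Definition inj_on {X Y : Type} (S : X -> Prop) (f : X -> Y) : Prop :=
  forall x y, S x -> S y -> f x = f y -> x = y.

Lemma to_nat_pair_inj a b c d :
  Cantor.to_nat (a, b) = Cantor.to_nat (c, d) -> a = c /\ b = d.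
Proof.
  intro E. apply (f_equal Cantor.of_nat) in E.
  rewrite !Cantor.cancel_of_to in E. injection E. auto.
Qed.

Lemma inj_on_add_point {X Y : Type} (e : option Y -> Y) (S : X -> Prop) (f : X -> Y) (a : X) :
  (forall u v, e u = e v -> u = v) -> inj_on S f ->
  exists g : X -> Y, inj_on (fun x => x = a \/ S x) g.
Proof.
  intros He Hf.
  exists (fun x => e (if excluded_middle_informative (x = a) then None else Some (f x))).
  intros x y Hx Hy E. apply He in E.
  destruct (excluded_middle_informative (x = a)), (excluded_middle_informative (y = a));
    try congruence.
  injection E as E. destruct Hx, Hy; try congruence. apply Hf; auto.
Qed.

Lemma inj_on_image {X Y Z : Type} (S : X -> Prop) (f : X -> Z) (g : X -> Y) :
  inhabited X -> inj_on S f ->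
  exists h : Y -> Z, inj_on (fun y => exists x, S x /\ y = g x) h.
Proof.
  intros [x0] Hf.
  assert (Hpre : forall y, exists x, (exists x, S x /\ y = g x) -> S x /\ y = g x).
  { intro y. destruct (classic (exists x, S x /\ y = g x)) as [[x Hx]|Hn].
    - exists x. auto.
    - exists x0. tauto. }
  apply choice in Hpre as [pre Hpre].
  exists (fun y => f (pre y)). intros y1 y2 H1 H2 E.
  destruct (Hpre y1 H1) as [S1 ->], (Hpre y2 H2) as [S2 ->].
  rewrite (Hf _ _ S1 S2 E). reflexivity.
Qed.

Lemma exists_wf_recursive {X Y : Type} (R : X -> X -> Prop) (wf : well_founded R) (y0 : Y)
  (Q : X -> (X -> Y) -> Y -> Prop) :
  (forall x g1 g2, (forall y, R y x -> g1 y = g2 y) -> forall v, Q x g1 v -> Q x g2 v) ->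
  (forall x g, exists v, Q x g v) ->
  exists F : X -> Y, forall x, Q x F (F x).
Proof.
  intros Hloc Hex.
  set (ext := fun x (h : forall y, R y x -> Y) (y : X) =>
    match excluded_middle_informative (R y x) with
    | left p => h y p | right _ => y0 end).
  set (body := fun x (h : forall y, R y x -> Y) =>
    proj1_sig (constructive_indefinite_description _ (Hex x (ext x h)))).
  set (F := Fix wf (fun _ => Y) body).
  exists F. intro x.
  assert (EF : F x = body x (fun y _ => F y)).
  { unfold F. apply (Fix_eq wf (fun _ => Y) body).
    intros x0 f g Hfg.
    assert (f = g) as ->.
    { apply functional_extensionality_dep; intro y.
      apply functional_extensionality_dep; intro p. apply Hfg. }
    reflexivity. }
  rewrite EF.
  apply (Hloc x (ext x (fun y _ => F y))).
  - intros y Ry. unfold ext. destruct (excluded_middle_informative (R y x)); tauto.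
  - exact (proj2_sig (constructive_indefinite_description _ (Hex x _))).
Qed.

Lemma iter_increasing {X : Type} (R : X -> X -> Prop) (P : X -> Prop) (f : X -> X) x :
  (forall x y z, R x y -> R y z -> R x z) ->
  (forall x, P x -> P (f x) /\ R x (f x)) -> P x ->
  (forall k, P (Nat.iter k f x)) /\
  (forall j k, j < k -> R (Nat.iter j f x) (Nat.iter k f x)).
Proof.
  intros Htrans Hf Hx.
  assert (HP : forall k, P (Nat.iter k f x)).
  { induction k; simpl; auto. apply Hf; auto. }
  split; auto. intros j k Hjk. induction Hjk; simpl.
  - apply Hf; auto.
  - eapply Htrans; eauto. apply Hf; auto.
Qed.

Lemma increasing_seq {X : Type} (R : X -> X -> Prop) (P : X -> Prop) (x0 : X) :
  (forall x y z, R x y -> R y z -> R x z) -> P x0 ->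
  (forall x, P x -> exists y, P y /\ R x y) ->
  exists s : nat -> X, (forall k, P (s k)) /\ (forall j k, j < k -> R (s j) (s k)).
Proof.
  intros Htrans H0 Hstep.
  assert (Hnext : forall x, exists y, P x -> P y /\ R x y).
  { intro x. destruct (classic (P x)) as [Px|Px].
    - destruct (Hstep x Px) as [y Hy]. exists y; auto.
    - exists x. tauto. }
  apply choice in Hnext as [next Hnext].
  exists (fun k => Nat.iter k next x0).
  exact (iter_increasing R P next x0 Htrans Hnext H0).
Qed.

Section WellOrder.
Context {X : Type} {lt : X -> X -> Prop} (Hwo : well_order lt).

Lemma wo_wf : well_founded lt. Proof. apply Hwo. Qed.
Lemma wo_irrefl x : ~ lt x x. Proof. apply Hwo. Qed.
Lemma wo_trans x y z : lt x y -> lt y z -> lt x z. Proof. apply Hwo. Qed.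
Lemma wo_total x y : lt x y \/ x = y \/ lt y x. Proof. apply Hwo. Qed.

Lemma wo_lt_le_trans x y z : lt x y -> le lt y z -> lt x z.
Proof. intros H [<-|H2]; auto. eapply wo_trans; eauto. Qed.

Lemma wo_not_lt x y : ~ lt x y -> le lt y x.
Proof. intros H. destruct (wo_total x y) as [|[|]]; [tauto|left|right]; auto. Qed.

Lemma wo_not_le x y : ~ le lt y x -> lt x y.
Proof. intros H. destruct (wo_total x y) as [|[|]]; auto; exfalso; apply H; [left|right]; auto. Qed.

Lemma wo_lt_le_false x y : lt x y -> le lt y x -> False.
Proof. intros H1 H2. apply (wo_irrefl x). eapply wo_lt_le_trans; eauto. Qed.

Lemma wo_least (P : X -> Prop) x0 : P x0 -> exists m, P m /\ forall z, P z -> le lt m z.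
Proof.
  intros H0. apply NNPP; intro Hn.
  assert (Hnone : forall x, ~ P x).
  { intro x. induction x as [x IH] using (well_founded_ind wo_wf). intro Px.
    apply Hn. exists x. split; auto. intros z Pz. apply wo_not_lt. intro Hzx.
    exact (IH z Hzx Pz). }
  exact (Hnone x0 H0).
Qed.

Lemma wo_bounded_or_cofinal (S : X -> Prop) :
  (exists b, forall s, S s -> lt s b) \/ (forall b, exists s, S s /\ le lt b s).
Proof.
  destruct (classic (exists b, forall s, S s -> lt s b)) as [|Hn]; [left; auto|right].
  intro b. apply NNPP; intro Hb. apply Hn. exists b. intros s Ss.
  apply NNPP; intro Hsb. apply Hb. exists s. split; auto. apply wo_not_lt; auto.
Qed.

(* If [S] were cofinal, choosing for each [x] an element [s x] of [S] above it,
   [x |-> pair (h (s x)) (index of x below s x)] would inject [X] into [Y]. *)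
Lemma wo_small_bounded {Y : Type} (pair : Y -> Y -> Y) :
  (forall u v u' v', pair u v = pair u' v' -> u = u' /\ v = v') ->
  (~ exists f : X -> Y, forall x y, f x = f y -> x = y) ->
  (forall a, exists f : X -> Y, inj_on (fun y => le lt y a) f) ->
  forall (S : X -> Prop) (h : X -> Y), inj_on S h -> exists b, forall s, S s -> lt s b.
Proof.
  intros Hpair Hbig Hseg S h Hh.
  destruct (wo_bounded_or_cofinal S) as [|Hcof]; auto. exfalso.
  apply choice in Hcof as [s Hs]. apply choice in Hseg as [idx Hidx].
  apply Hbig. exists (fun x => pair (h (s x)) (idx (s x) x)).
  intros x y E. apply Hpair in E as [E1 E2].
  destruct (Hs x) as [Sx Lx], (Hs y) as [Sy Ly].
  assert (Es : s x = s y) by (apply Hh; auto).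
  rewrite <- Es in E2, Ly. apply (Hidx (s x)); auto.
Qed.

End WellOrder.

Section Omega1.
Context {T : Type} {lt : T -> T -> Prop} (HT : is_omega1 lt).

Let Hwo : well_order lt := proj1 HT.

Lemma omega1_uncountable : ~ exists f : T -> nat, forall x y, f x = f y -> x = y.
Proof. apply HT. Qed.

Lemma omega1_seg_countable a : exists f : T -> nat, inj_on (fun y => lt y a) f.
Proof. apply HT. Qed.

Lemma omega1_inhabited : inhabited T.
Proof.
  apply NNPP; intro H. apply omega1_uncountable. exists (fun _ => 0).
  intro x. exfalso. exact (H (inhabits x)).
Qed.

Lemma omega1_seg_le_countable a : exists f : T -> nat, inj_on (fun y => le lt y a) f.
Proof.
  destruct (omega1_seg_countable a) as [f Hf].
  destruct (inj_on_add_point (fun o => match o with Some n => S n | None => 0 end)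
    (fun y => lt y a) f a) as [g Hg]; auto.
  - intros [u|] [v|]; simpl; congruence.
  - exists g. exact Hg.
Qed.

Lemma omega1_countable_bounded (S : T -> Prop) (h : T -> nat) :
  inj_on S h -> exists b, forall s, S s -> lt s b.
Proof.
  apply (wo_small_bounded Hwo (fun u v => Cantor.to_nat (u, v)) (to_nat_pair_inj)).
  - exact omega1_uncountable.
  - exact omega1_seg_le_countable.
Qed.

Lemma omega1_nat_seq_bounded (g : nat -> T) : exists b, forall k, lt (g k) b.
Proof.
  destruct (inj_on_image (fun _ => True) (fun k => k) g) as [h Hh].
  - exact (inhabits 0).
  - intros j k _ _ E. exact E.
  - destruct (omega1_countable_bounded _ h Hh) as [b Hb].
    exists b. intro k. apply Hb. eauto.
Qed.

Lemma omega1_exists_gt x y : exists b, lt x b /\ lt y b.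
Proof.
  destruct (omega1_nat_seq_bounded (fun k => match k with 0 => x | _ => y end)) as [b Hb].
  exists b. exact (conj (Hb 0) (Hb 1)).
Qed.

Lemma club_gt d : club lt (fun y => lt d y).
Proof.
  split.
  - intro x. destruct (omega1_exists_gt d x) as [y [Hd Hx]]. exists y. split; auto. right; auto.
  - intros a [[y Hy] _] H. destruct (H y Hy) as [z [Hdz [_ Hza]]].
    eapply wo_trans; eauto.
Qed.

Lemma unbounded_gt (A : T -> Prop) d :
  unbounded lt A -> unbounded lt (fun y => A y /\ lt d y).
Proof.
  intros HA x. destruct (omega1_exists_gt d x) as [e [Hde Hxe]].
  destruct (HA e) as [y [Ay Hey]].
  exists y. split; [split|]; auto.
  - eapply wo_lt_le_trans; eauto.
  - right. eapply wo_lt_le_trans; eauto.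
Qed.

Lemma omega1_unbounded_colour (c : T -> nat) : exists k, unbounded lt (fun y => c y = k).
Proof.
  apply NNPP; intro Hn.
  assert (Hbound : forall k, exists x, forall y, c y = k -> ~ le lt x y).
  { intro k. apply NNPP; intro H. apply Hn. exists k. intro x.
    apply NNPP; intro H'. apply H. exists x. intros y E L. apply H'. eauto. }
  apply choice in Hbound as [bound Hbound].
  destruct (omega1_nat_seq_bounded bound) as [b Hb].
  apply (Hbound (c b) b eq_refl). right. apply Hb.
Qed.

Lemma omega1_gap_function (next : T -> T) :
  exists F : T -> T, forall x' x k, lt x' x -> lt (Nat.iter k next (F x')) (F x).
Proof.
  destruct omega1_inhabited as [t0].
  destruct (choice _ omega1_seg_countable) as [idx Hidx].
  destruct (exists_wf_recursive lt (wo_wf Hwo) t0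
    (fun x g v => forall x' k, lt x' x -> lt (Nat.iter k next (g x')) v)) as [F HF].
  - intros x g1 g2 Hg v H x' k Hx'. rewrite <- Hg; auto.
  - intros x g.
    destruct (inj_on_image (fun p : T * nat => lt (fst p) x)
      (fun p => Cantor.to_nat (idx x (fst p), snd p))
      (fun p => Nat.iter (snd p) next (g (fst p)))) as [h Hh].
    + exact (inhabits (t0, 0)).
    + intros [x1 k1] [x2 k2] H1 H2 E. apply to_nat_pair_inj in E as [E1 E2].
      simpl in *. subst. f_equal. apply (Hidx x); auto.
    + destruct (omega1_countable_bounded _ h Hh) as [b Hb].
      exists b. intros x' k Hx'. apply Hb. exists (x', k). auto.
  - exists F. intros x' x k. apply HF.
Qed.

(* [(x, k) |-> next^k (F x)]: the [next]-orbits of the [F x] are pairwise disjoint. *)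
Lemma omega1_prod_nat_inj :
  exists P : T -> nat -> T, forall x k y j, P x k = P y j -> x = y /\ k = j.
Proof.
  destruct (choice _ (fun x => omega1_exists_gt x x)) as [next Hnext].
  assert (Hiter : forall x j k, j < k -> lt (Nat.iter j next x) (Nat.iter k next x)).
  { intro x. apply (iter_increasing lt (fun _ => True) next x (wo_trans Hwo)); auto.
    intros y _. split; [exact I|apply Hnext]. }
  destruct (omega1_gap_function next) as [F HF].
  exists (fun x k => Nat.iter k next (F x)).
  assert (Hsep : forall x k y j, lt x y -> Nat.iter k next (F x) <> Nat.iter j next (F y)).
  { intros x k y j Hxy E. apply (wo_irrefl Hwo (Nat.iter k next (F x))).
    apply (wo_lt_le_trans Hwo _ (F y)); [exact (HF x y k Hxy)|].
    rewrite E. destruct j; [left; reflexivity|right; apply (Hiter (F y) 0); lia]. }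
  intros x k y j E. destruct (wo_total Hwo x y) as [H|[<-|H]].
  - exfalso. eapply Hsep; eauto.
  - split; auto. destruct (Nat.lt_total k j) as [H|[H|H]]; auto; exfalso;
      apply (wo_irrefl Hwo (Nat.iter j next (F x))).
    + rewrite <- E at 1. apply Hiter; auto.
    + rewrite <- E at 2. apply Hiter; auto.
  - exfalso. symmetry in E. eapply Hsep; eauto.
Qed.

Lemma omega1_nat_inj : exists e : nat -> T, forall j k, e j = e k -> j = k.
Proof.
  destruct omega1_inhabited as [t0]. destruct omega1_prod_nat_inj as [P HP].
  exists (P t0). intros j k E. apply (HP _ _ _ _ E).
Qed.

Lemma omega1_option_inj : exists e : option T -> T, forall u v, e u = e v -> u = v.
Proof.
  destruct omega1_inhabited as [t0]. destruct omega1_prod_nat_inj as [P HP].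
  exists (fun o => match o with Some x => P x 1 | None => P t0 0 end).
  intros [u|] [v|] E; apply HP in E as [E1 E2]; congruence.
Qed.

(* [(x, y) |-> (b, index of x below b, index of y below b)] for some [b] above [x] and [y]. *)
Lemma omega1_prod_inj :
  exists P : T -> T -> T, forall x y x' y', P x y = P x' y' -> x = x' /\ y = y'.
Proof.
  destruct omega1_prod_nat_inj as [Pn HPn].
  destruct (choice _ omega1_seg_countable) as [idx Hidx].
  destruct (choice _ (fun p : T * T => omega1_exists_gt (fst p) (snd p))) as [ub Hub].
  exists (fun x y => Pn (ub (x, y)) (Cantor.to_nat (idx (ub (x, y)) x, idx (ub (x, y)) y))).
  intros x y x' y' E. apply HPn in E as [E1 E2]. apply to_nat_pair_inj in E2 as [E2 E3].
  destruct (Hub (x, y)) as [Hx Hy], (Hub (x', y')) as [Hx' Hy']. simpl in *.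
  rewrite <- E1 in E2, E3, Hx', Hy'.
  split; apply (Hidx (ub (x, y))); auto.
Qed.

End Omega1.

Section Aleph2.
Context {T U : Type} {ltT : T -> T -> Prop} (HT : is_omega1 ltT).

Lemma card_aleph2_nonempty (B : U -> Prop) : @card_aleph2 T U B -> exists a, B a.
Proof.
  intros HB. apply NNPP; intro Hn. apply HB.
  destruct (omega1_inhabited HT) as [t0]. exists (fun _ => t0).
  intros x y Bx. exfalso. eauto.
Qed.

Lemma card_aleph2_pigeonhole {C : Type} (e : C -> T) (B : U -> Prop) (g : U -> C) :
  (forall u v, e u = e v -> u = v) -> @card_aleph2 T U B ->
  exists k, @card_aleph2 T U (fun a => B a /\ g a = k).
Proof.
  intros He HB. apply NNPP; intro Hn.
  assert (Hsmall : forall k, exists f : U -> T, inj_on (fun a => B a /\ g a = k) f).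
  { intro k. apply NNPP; intro H. apply Hn. exists k. intros [f Hf]. apply H.
    exists f. intros x y Hx Hy. apply Hf; auto. }
  apply choice in Hsmall as [F HF].
  destruct (omega1_prod_inj HT) as [P HP].
  apply HB. exists (fun a => P (e (g a)) (F (g a) a)).
  intros x y Bx By E. apply HP in E as [E1 E2]. apply He in E1.
  rewrite <- E1 in E2. apply (HF (g x)); auto.
Qed.

End Aleph2.

Section Omega2.
Context {T U : Type} {ltT : T -> T -> Prop} {ltU : U -> U -> Prop}
  (HT : is_omega1 ltT) (HU : is_omega2 ltT ltU).

Let Hwo : well_order ltU := proj1 HU.

Lemma omega2_card_aleph2 : @card_aleph2 T U (fun _ => True).
Proof. intros [f Hf]. apply HU. exists f. intros; apply Hf; auto. Qed.

Lemma omega2_seg_small a : exists f : U -> T, inj_on (fun y => ltU y a) f.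
Proof. apply HU. Qed.

Lemma omega2_small_bounded (S : U -> Prop) (h : U -> T) :
  inj_on S h -> exists b, forall s, S s -> ltU s b.
Proof.
  destruct (omega1_prod_inj HT) as [P HP].
  apply (wo_small_bounded Hwo P HP); [apply HU|]. intro a.
  destruct (omega1_option_inj HT) as [e He].
  destruct (omega2_seg_small a) as [f Hf].
  destruct (inj_on_add_point e (fun y => ltU y a) f a He Hf) as [g Hg].
  exists g. exact Hg.
Qed.

Lemma card_aleph2_above_small (B S : U -> Prop) (h : U -> T) :
  @card_aleph2 T U B -> inj_on S h -> exists z, B z /\ forall s, S s -> ltU s z.
Proof.
  intros HB Hh. destruct (omega2_small_bounded S h Hh) as [b Hb].
  destruct (wo_bounded_or_cofinal Hwo B) as [[b' Hb']|Hcof].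
  - exfalso. apply HB. destruct (omega2_seg_small b') as [f Hf].
    exists f. intros x y Bx By. apply Hf; auto.
  - destruct (Hcof b) as [z [Bz Hbz]]. exists z. split; auto.
    intros s Ss. eapply wo_lt_le_trans; eauto.
Qed.

Lemma omega2_increasing_unbounded (F : U -> U) :
  (forall x y, ltU x y -> ltU (F x) (F y)) -> forall y, exists x, le ltU y (F x).
Proof.
  intros Hmono y. apply NNPP; intro Hn.
  destruct (omega2_seg_small y) as [f Hf].
  apply omega2_card_aleph2. exists (fun x => f (F x)). intros x1 x2 _ _ E.
  apply Hf in E; try (apply (wo_not_le Hwo); eauto).
  destruct (wo_total Hwo x1 x2) as [H|[H|H]]; auto; exfalso;
    apply Hmono in H; rewrite E in H; exact (wo_irrefl Hwo _ H).
Qed.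

(* Enumerate [B] increasingly: [F x] is the least element of [B] above all [F x'], [x' < x]. *)
Lemma card_aleph2_otp_full (B : U -> Prop) : @card_aleph2 T U B -> otp_full ltU B.
Proof.
  intros HB. destruct (card_aleph2_nonempty HT B HB) as [u0 _].
  set (above := fun (g : U -> U) x z => B z /\ forall x', ltU x' x -> ltU (g x') z).
  destruct (exists_wf_recursive ltU (wo_wf Hwo) u0
    (fun x g v => above g x v /\ forall z, above g x z -> le ltU v z)) as [F HF].
  - intros x g1 g2 Hg v [[Bv Hv] Hleast]. split; [split|]; auto.
    + intros x' Hx'. rewrite <- Hg; auto.
    + intros z [Bz Hz]. apply Hleast. split; auto. intros x' Hx'. rewrite Hg; auto.
  - intros x g. destruct (omega2_seg_small x) as [f Hf].
    destruct (inj_on_image (fun x' => ltU x' x) f g (inhabits u0) Hf) as [h Hh].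
    destruct (card_aleph2_above_small B _ h HB Hh) as [z [Bz Hz]].
    apply (wo_least Hwo (above g x) z). split; auto. intros x' Hx'. apply Hz. eauto.
  - assert (Hmono : forall x y, ltU x y -> ltU (F x) (F y)) by (intros; apply HF; auto).
    exists F. split; [exact Hmono|split; [intro x; apply HF|]].
    intros y By. destruct (omega2_increasing_unbounded F Hmono y) as [x0 Hx0].
    destruct (wo_least Hwo (fun x => le ltU y (F x)) x0 Hx0) as [x [[Ey|Hlt] Hmin]].
    + exists x. auto.
    + exfalso. apply (wo_lt_le_false Hwo y (F x) Hlt). apply HF. split; auto.
      intros x' Hx'. apply (wo_not_le Hwo). intro Hle.
      exact (wo_lt_le_false Hwo x' x Hx' (Hmin x' Hle)).
Qed.

End Omega2.

Lemma in_tau_0 n p : in_tau n 0 p <-> fst p < n.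
Proof. unfold in_tau. lia. Qed.

Lemma in_tau_succ n m p : in_tau n m p -> in_tau (S n) 0 p.
Proof. unfold in_tau. lia. Qed.

Lemma tau_incr_succ {T : Type} (lt : T -> T -> Prop) n m f :
  tau_incr lt (S n) 0 f -> tau_incr lt n m f.
Proof. intros Hf p q Hp Hq. apply Hf; eapply in_tau_succ; eauto. Qed.

Section Clubsuit.
Context {T U : Type} {ltT : T -> T -> Prop} {ltU : U -> U -> Prop}
  (HT : is_omega1 ltT) (HU : is_omega2 ltT ltU) (ladder : T -> T -> Prop)
  (ladder_cofinal : forall a, is_limit ltT a -> cofinal_in ltT (ladder a) a)
  (ladder_guess : forall A, unbounded ltT A ->
     stationary ltT (fun a => is_limit ltT a /\ forall x, ladder a x -> A x)).

Let Hwo : well_order ltT := proj1 HT.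

Lemma ladder_guess_above (A : T -> Prop) d : unbounded ltT A ->
  exists δ, is_limit ltT δ /\ forall x, ladder δ x -> A x /\ ltT d x.
Proof.
  intros HA.
  destruct (ladder_guess _ (unbounded_gt HT A d HA) _ (club_gt HT d)) as [δ [[Hlim Hsub] _]].
  exists δ. auto.
Qed.

Lemma ladder_increasing_seq δ : is_limit ltT δ -> exists s : nat -> T,
  (forall k, ladder δ (s k)) /\ (forall j k, j < k -> ltT (s j) (s k)).
Proof.
  intros Hlim. destruct (ladder_cofinal δ Hlim) as [Hbelow Hcof].
  destruct Hlim as [[y Hy] Hlim]. destruct (Hcof y Hy) as [x0 [Hx0 _]].
  apply (increasing_seq ltT _ x0 (wo_trans Hwo) Hx0).
  intros x Hx. destruct (Hlim x (Hbelow x Hx)) as [z [Hxz Hzδ]].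
  destruct (Hcof z Hzδ) as [w [Hw Hzw]]. exists w. split; auto.
  eapply wo_lt_le_trans; eauto.
Qed.

Lemma common_ladder (B : U -> Prop) (A : U -> T -> Prop) d :
  @card_aleph2 T U B -> (forall a, B a -> unbounded ltT (A a)) ->
  exists (B' : U -> Prop) (s : nat -> T) (δ : T),
    @card_aleph2 T U B' /\ (forall a, B' a -> B a) /\
    (forall j k, j < k -> ltT (s j) (s k)) /\
    (forall k, ltT d (s k) /\ ltT (s k) δ /\ forall a, B' a -> A a (s k)).
Proof.
  intros HB HA. destruct (omega1_inhabited HT) as [t0].
  assert (Hguess : forall a, exists δ, B a ->
     is_limit ltT δ /\ forall x, ladder δ x -> A a x /\ ltT d x).
  { intro a. destruct (classic (B a)) as [Ba|Ba].
    - destruct (ladder_guess_above (A a) d (HA a Ba)) as [δ Hδ]. exists δ; auto.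
    - exists t0. tauto. }
  apply choice in Hguess as [G HG].
  destruct (card_aleph2_pigeonhole HT (fun t => t) B G (fun u v E => E) HB) as [δ Hδ].
  destruct (card_aleph2_nonempty HT _ Hδ) as [a0 [Ba0 <-]].
  destruct (HG a0 Ba0) as [Hlim _].
  destruct (ladder_increasing_seq _ Hlim) as [s [Hs Hincr]].
  exists (fun a => B a /\ G a = G a0), s, (G a0).
  split; [exact Hδ|split; [intros a [Ba _]; exact Ba|split; [exact Hincr|]]].
  intro k. destruct (HG a0 Ba0) as [_ Hsub]. split; [apply Hsub, Hs|split].
  - apply (ladder_cofinal _ Hlim), Hs.
  - intros a [Ba Ea]. destruct (HG a Ba) as [_ Hsub']. rewrite Ea in Hsub'. apply Hsub', Hs.
Qed.

Lemma common_omega_blocks N (B0 : U -> Prop) (A : U -> T -> Prop) :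
  @card_aleph2 T U B0 -> (forall a, B0 a -> unbounded ltT (A a)) ->
  exists (B : U -> Prop) (f : nat * nat -> T) (d : T),
    @card_aleph2 T U B /\ (forall a, B a -> B0 a) /\ tau_incr ltT N 0 f /\
    (forall p, in_tau N 0 p -> ltT (f p) d /\ forall a, B a -> A a (f p)).
Proof.
  intros HB0 HA. destruct (omega1_inhabited HT) as [t0].
  induction N as [|N IH].
  - exists B0, (fun _ => t0), t0.
    split; [exact HB0|split; [auto|split]].
    + intros p q Hp. apply in_tau_0 in Hp. inversion Hp.
    + intros p Hp. apply in_tau_0 in Hp. inversion Hp.
  - destruct IH as [B [f [d [HB [HBB0 [Hf Hfd]]]]]].
    destruct (common_ladder B A d HB (fun a Ba => HA a (HBB0 a Ba)))
      as [B' [s [δ [HB' [HB'B [Hs Hsd]]]]]].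
    exists B', (fun p => if fst p <? N then f p else s (snd p)), δ.
    split; [exact HB'|split; [auto|split]].
    + intros p q Hp Hq Hpq. rewrite in_tau_0 in Hp, Hq.
      destruct (Nat.ltb_spec (fst p) N), (Nat.ltb_spec (fst q) N).
      * apply Hf; auto; apply in_tau_0; auto.
      * apply (wo_trans Hwo _ d); [apply Hfd; apply in_tau_0; auto|apply Hsd].
      * exfalso. destruct Hpq as [H1|[H1 H2]]; lia.
      * apply Hs. destruct Hpq as [H1|[H1 H2]]; [lia|auto].
    + intros p Hp. rewrite in_tau_0 in Hp. destruct (Nat.ltb_spec (fst p) N).
      * destruct (Hfd p) as [Hfpd HfpA]; [apply in_tau_0; auto|].
        split; [|auto]. apply (wo_trans Hwo _ d); [exact Hfpd|]. apply (wo_trans Hwo _ (s 0)); apply Hsd.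
      * apply Hsd.
Qed.

Lemma clubsuit_intersection_otp_ge (A : U -> T -> Prop) :
  (forall a, unbounded ltT (A a)) -> forall n m, exists B : U -> Prop,
    @card_aleph2 T U B /\ otp_ge_tau ltT n m (fun x => forall a, B a -> A a x).
Proof.
  intros HA n m.
  destruct (common_omega_blocks (S n) _ A (omega2_card_aleph2 HU) (fun a _ => HA a))
    as [B [f [d [HB [_ [Hf Hfd]]]]]].
  exists B. split; [exact HB|]. exists f. split; [exact (tau_incr_succ _ _ _ _ Hf)|].
  intros p Hp a Ba. apply (Hfd p); [eapply in_tau_succ; eauto|exact Ba].
Qed.

Lemma clubsuit_polarized n m (c : U -> T -> nat) :
  exists (A : U -> Prop) (B : T -> Prop),
    otp_full ltU A /\ otp_eq_tau ltT n m B /\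
    exists k : nat, forall a b, A a -> B b -> c a b = k.
Proof.
  destruct (choice _ (fun a => omega1_unbounded_colour HT (c a))) as [K HK].
  destruct (omega1_nat_inj HT) as [e He].
  destruct (card_aleph2_pigeonhole HT e _ K He (omega2_card_aleph2 HU)) as [k Hk].
  destruct (common_omega_blocks (S n) _ (fun a y => c a y = K a) Hk (fun a _ => HK a))
    as [A [f [d [HA [HAK [Hf Hfd]]]]]].
  exists A, (fun y => exists p, in_tau n m p /\ f p = y).
  split; [exact (card_aleph2_otp_full HT HU A HA)|split].
  - exists f. split; [exact (tau_incr_succ _ _ _ _ Hf)|split; eauto].
  - exists k. intros a b Aa [p [Hp <-]]. destruct (HAK a Aa) as [_ <-].
    apply (Hfd p); [eapply in_tau_succ; eauto|exact Aa].
Qed.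

End Clubsuit.

Theorem mainTheorem5 (T U : Type) (ltT : T -> T -> Prop) (ltU : U -> U -> Prop)
  (HT : is_omega1 ltT) (HU : is_omega2 ltT ltU) (Hclub : clubsuit ltT) :
  (forall (A : U -> T -> Prop), (forall a, unbounded ltT (A a)) ->
     forall n m : nat, exists B : U -> Prop,
       @card_aleph2 T U B /\
       otp_ge_tau ltT n m (fun x => forall a, B a -> A a x)) /\
  (forall (n m : nat) (c : U -> T -> nat),
     exists (A : U -> Prop) (B : T -> Prop),
       otp_full ltU A /\ otp_eq_tau ltT n m B /\
       exists k : nat, forall a b, A a -> B b -> c a b = k).
Proof.
  destruct Hclub as [ladder [Hcofinal Hguess]]. split.
  - exact (clubsuit_intersection_otp_ge HT HU ladder Hcofinal Hguess).
  - exact (clubsuit_polarized HT HU ladder Hcofinal Hguess).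
Qed.
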